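(* Fix $x\in\mathbb{R}^d$. For every step $t$ and every two distinct centers $c',c''\in C_t$ with $\|c'-c''\|_2\ge D_t/2$, $$\Pr\big\{c'\notin C_{t+1}\text{ or } c''\notin C_{t+1}\mid\mathcal{T}_t\big\}\ge\frac{1}{128d}.$$
   Context: Centers $C=\{c^1,\dots,c^k\}\subset\mathbb{R}^d$, $\delta\in(0,1)$, $\varepsilon=\min\{\delta/(15\ln k),1/320\}$. A median of a finite nonempty $S\subset\mathbb{R}^d$ is a point $m$ such that for every coordinate $i$ each of $\{c\in S:c_i<m_i\}$, $\{c\in S:c_i>m_i\}$ has at most $|S|/2$ elements. Algorithm: $\mathcal{T}_1$ is a root (cell $\mathbb{R}^d$) with assigned centers $C$. For $t=1,2,\dots$, while some leaf has at least two assigned centers: sample independently $i_t$ uniform in $\{1,\dots,d\}$, $\theta_t$ uniform in $(0,1)$, $\sigma_t$ uniform in $\{\pm1\}$; to every leaf $u$ of $\mathcal{T}_t$ with $|C_u|\ge2$ apply Divide-and-Share with $(i,\theta,\sigma)=(i_t,\theta_t,\sigma_t)$, giving $\mathcal{T}_{t+1}$. Divide-and-Share on node $u$: $m^u$ a median of $C_u$, $R_u=\max_{c\in C_u}\|c-m^u\|_2$, $Left=\{c\in C_u:c_i\le m^u_i+(\sigma+\varepsilon)\sqrt\theta R_u\}$, $Right=\{c\in C_u:c_i\ge m^u_i+(\sigma-\varepsilon)\sqrt\theta R_u\}$; if both nonempty, $u$ is split into children $\{y\in u: y_i\le m^u_i+\sigma\sqrt\theta R_u\}$ with centers $Left$ and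 $\{y\in u: y_i> m^u_i+\sigma\sqrt\theta R_u\}$ with centers $Right$; otherwise $u$ is unchanged. For the fixed point $x$, $u_t$ denotes the leaf of $\mathcal{T}_t$ containing $x$, $C_t=C_{u_t}$, and $D_t=\max\{\|a-b\|_2:a,b\in C_t\}$. If the algorithm has stopped before step $s$, $\mathcal{T}_s$ denotes the final tree. *)

From HB Require Import structures.
From mathcomp Require Import all_boot all_order all_algebra.
From mathcomp Require Import all_classical all_reals all_analysis.
Set Implicit Arguments. Unset Strict Implicit. Unset Printing Implicit Defensive.
Import Order.TTheory GRing.Theory Num.Theory.
Local Open Scope ring_scope.
Local Open Scope classical_set_scope.

Section Defs.
Variables (R : realType) (d : nat).
Notation pt := 'rV[R]_d.

Definition dist2 (a b : pt) : R :=
  Num.sqrt (\sum_(i < d) (a ord0 i - b ord0 i) ^+ 2).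

Definition is_median (S : seq pt) (m : pt) : Prop :=
  forall i : 'I_d,
    (2 * count (fun c : pt => (c ord0 i < m ord0 i)%R) S <= size S)%N /\
    (2 * count (fun c : pt => (c ord0 i > m ord0 i)%R) S <= size S)%N.

Definition radius (S : seq pt) (m : pt) : R :=
  \big[Num.max/0]_(c <- S) dist2 c m.

Definition diam (S : seq pt) : R :=
  \big[Num.max/0]_(a <- S) \big[Num.max/0]_(b <- S) dist2 a b.

Definition eps_of (delta : R) (k : nat) : R :=
  Num.min (delta / (15 * ln (k%:R))) (1 / 320).

(* Divide-and-Share on a leaf with centers S, median m, radius Ru, applied with
   (i, theta, sigma); returns the centers of the resulting leaf containing x. *)
Definition next_centers (eps : R) (S : seq pt) (m : pt) (x : pt)
    (i : 'I_d) (theta sigma : R) : seq pt :=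
  let Ru := radius S m in
  let Lft := [seq c : pt <- S | c ord0 i <= m ord0 i + (sigma + eps) * Num.sqrt theta * Ru] in
  let Rgt := [seq c : pt <- S | c ord0 i >= m ord0 i + (sigma - eps) * Num.sqrt theta * Ru] in
  if (Lft != [::]) && (Rgt != [::]) then
    (if x ord0 i <= m ord0 i + sigma * Num.sqrt theta * Ru then Lft else Rgt)
  else S.

Definition sep_event (eps : R) (S : seq pt) (m x c1 c2 : pt) (i : 'I_d) (sigma : R)
  : set R :=
  [set theta : R | 0 < theta < 1 /\
     ((c1 \notin next_centers eps S m x i theta sigma) \/
      (c2 \notin next_centers eps S m x i theta sigma))].

(* Pr over i ~ Unif{1..d}, theta ~ Unif(0,1), sigma ~ Unif{+1,-1} (independent) *)
Definition sep_prob (eps : R) (S : seq pt) (m x c1 c2 : pt) : \bar R :=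
  (\sum_(i < d) \sum_(s : bool)
     ((1 / (2 * d%:R))%:E *
      (@lebesgue_measure R) (sep_event eps S m x c1 c2 i (if s then 1%R else (-1)%R))))%E.

End Defs.

From Pilot Require Import Defs.
From HB Require Import structures.
From mathcomp Require Import all_boot all_order all_algebra.
From mathcomp Require Import all_classical all_reals all_analysis.
From mathcomp Require Import ring lra zify.
Import Order.TTheory GRing.Theory Num.Theory.
Set Implicit Arguments. Unset Strict Implicit. Unset Printing Implicit Defensive.
Local Open Scope ring_scope.

(* Fix a coordinate i and write u <= v for the offsets of the two centers from
   the median in that coordinate, normalised by R_u.  For the sign +1 the centers
   are separated as soon as u/(1-eps) < sqrt theta < v/(1+eps), and for the sign -1
   as soon as -v/(1-eps) < sqrt theta < -u/(1+eps); since theta is uniform,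
   these windows have total measure at least 2/5 (v-u)^2 - 5 eps (u^2+v^2).
   Summing over the coordinates gives
   (2/5 |c'-c''|^2 - 5 eps (|c'-m|^2 + |c''-m|^2)) / R_u^2 >= 3/160, because every
   center is within sqrt 2 D of a coordinatewise median, so that
   R_u^2 <= 2 D^2 <= 8 |c'-c''|^2.  Averaging over the 2d choices of (i, sigma)
   gives the bound 1/(128 d). *)

Section CountSum.
Variables (T : eqType) (R : realDomainType).
Implicit Types (P : pred T) (F : T -> R) (s : seq T).

Lemma count_mul_le_sum P F w s :
  (forall a, P a -> w <= F a) -> (forall a, 0 <= F a) ->
  (count P s)%:R * w <= \sum_(a <- s) F a.
Proof.
move=> PF F0; elim: s => [|a s IH]; first by rewrite big_nil mul0r.
rewrite big_cons /= natrD mulrDl lerD //.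
by case: (boolP (P a)) => Pa /=; rewrite ?mul1r ?mul0r; [exact: PF | exact: F0].
Qed.

Lemma size_mul_le_sum P F w s :
  0 <= w -> (size s <= 2 * count P s)%N ->
  (forall a, P a -> w <= F a) -> (forall a, 0 <= F a) ->
  (size s)%:R * w <= 2 * \sum_(a <- s) F a.
Proof.
move=> w0 half PF F0; have := count_mul_le_sum s PF F0.
have : (size s)%:R <= 2 * (count P s)%:R :> R by rewrite -natrM ler_nat.
nra.
Qed.

Lemma sum_le_size_mul F w s :
  (forall a, a \in s -> F a <= w) -> \sum_(a <- s) F a <= (size s)%:R * w.
Proof.
elim: s => [|a s IH] Fw; first by rewrite big_nil mul0r.
rewrite big_cons /= -natr1 mulrDl mul1r addrC lerD ?Fw ?mem_head //.
by apply: IH => b bs; rewrite Fw // inE bs orbT.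
Qed.

End CountSum.

Section Geometry.
Variables (R : realType) (d : nat).
Notation pt := 'rV[R]_d.
Implicit Types (a b c m : pt) (S : seq pt).

Lemma dist2_ge0 a b : 0 <= dist2 a b.
Proof. exact: sqrtr_ge0. Qed.

Lemma dist2_sqr a b : dist2 a b ^+ 2 = \sum_(i < d) (a ord0 i - b ord0 i) ^+ 2.
Proof. by rewrite sqr_sqrtr // sumr_ge0 // => i _; exact: sqr_ge0. Qed.

Lemma coord_sqr_le_dist2 a b i : (a ord0 i - b ord0 i) ^+ 2 <= dist2 a b ^+ 2.
Proof.
by rewrite dist2_sqr (bigD1 i) //= lerDl sumr_ge0 // => j _; exact: sqr_ge0.
Qed.

Lemma dist2_eq0 a b : dist2 a b = 0 -> a = b.
Proof.
move/eqP; rewrite sqrtr_eq0 => le0.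
have sum0 : \sum_(i < d) (a ord0 i - b ord0 i) ^+ 2 = 0.
  by apply/eqP; rewrite eq_le le0 sumr_ge0 // => i _; exact: sqr_ge0.
have eq0 := psumr_eq0P (fun i _ => sqr_ge0 (a ord0 i - b ord0 i)) sum0.
by apply/rowP => j; apply/eqP; rewrite -subr_eq0 -sqrf_eq0 eq0.
Qed.

Lemma radius_ge0 S m : 0 <= Defs.radius S m.
Proof. exact: bigmax_ge_id. Qed.

Lemma dist2_le_radius S m c : c \in S -> dist2 c m <= Defs.radius S m.
Proof. by move=> cS; rewrite /Defs.radius (le_bigmax_seq _ _ _ _ cS). Qed.

Lemma dist2_le_diam S a b : a \in S -> b \in S -> dist2 a b <= diam S.
Proof.
move=> aS bS; apply: le_trans (le_bigmax_seq _ _ _ _ aS _) => //.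
exact: (le_bigmax_seq _ _ _ _ bS).
Qed.

(* At least half of the centers lie on the far side of m_i from c_i. *)
Lemma median_coord_sqr_le S m c i : is_median S m ->
  (size S)%:R * (c ord0 i - m ord0 i) ^+ 2 <=
  2 * \sum_(a <- S) (c ord0 i - a ord0 i) ^+ 2.
Proof.
move=> /(_ i) [lt_half gt_half].
have half_compl (P : pred pt) :
    (2 * count (predC P) S <= size S)%N -> (size S <= 2 * count P S)%N.
  by have := count_predC P S; lia.
case: (lerP (c ord0 i) (m ord0 i)) => [cm|mc].
- apply: (@size_mul_le_sum _ _ (fun a : pt => m ord0 i <= a ord0 i)).
  + exact: sqr_ge0.
  + apply: half_compl; rewrite (eq_count (a2 := fun a : pt => a ord0 i < m ord0 i)) //.
    by move=> a; rewrite /= -ltNge.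
  + by move=> a /= ma; nra.
  + by move=> a; exact: sqr_ge0.
- apply: (@size_mul_le_sum _ _ (fun a : pt => a ord0 i <= m ord0 i)).
  + exact: sqr_ge0.
  + apply: half_compl; rewrite (eq_count (a2 := fun a : pt => a ord0 i > m ord0 i)) //.
    by move=> a; rewrite /= -ltNge.
  + by move=> a /= am; nra.
  + by move=> a; exact: sqr_ge0.
Qed.

Lemma median_dist2_sqr_le S m c : is_median S m ->
  (size S)%:R * dist2 c m ^+ 2 <= 2 * \sum_(a <- S) dist2 c a ^+ 2.
Proof.
move=> Hm; rewrite dist2_sqr.
under [X in _ <= 2 * X]eq_bigr do rewrite dist2_sqr.
rewrite exchange_big /= !mulr_sumr; apply: ler_sum => i _.
exact: median_coord_sqr_le.
Qed.

Lemma median_dist2_le_diam S m c : is_median S m -> c \in S ->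
  dist2 c m ^+ 2 <= 2 * diam S ^+ 2.
Proof.
move=> Hm cS; have := median_dist2_sqr_le c Hm.
have : \sum_(a <- S) dist2 c a ^+ 2 <= (size S)%:R * diam S ^+ 2.
  apply: sum_le_size_mul => a aS; rewrite ler_sqr ?nnegrE ?dist2_ge0 //.
    exact: dist2_le_diam.
  exact: le_trans (dist2_ge0 c a) (dist2_le_diam cS aS).
have : 0 < (size S)%:R :> R by rewrite ltr0n; case: (S) cS.
have := sqr_ge0 (dist2 c m); have := sqr_ge0 (diam S); nra.
Qed.

Lemma radius_sqr_le_diam S m : is_median S m ->
  Defs.radius S m ^+ 2 <= 2 * diam S ^+ 2.
Proof.
move=> Hm; have D2_ge0 : 0 <= 2 * diam S ^+ 2 by rewrite mulr_ge0 ?sqr_ge0.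
rewrite -[X in _ <= X]sqr_sqrtr // ler_sqr ?nnegrE ?radius_ge0 ?sqrtr_ge0 //.
rewrite /Defs.radius big_seq; apply: bigmax_le => [|c cS]; first exact: sqrtr_ge0.
by rewrite {1}/dist2 ler_sqrt // -dist2_sqr median_dist2_le_diam.
Qed.

Lemma radius_sqr_le_dist2 S m a b : is_median S m -> a \in S -> b \in S ->
  diam S / 2 <= dist2 a b -> Defs.radius S m ^+ 2 <= 8 * dist2 a b ^+ 2.
Proof.
move=> Hm aS bS diam_le; have := radius_sqr_le_diam Hm.
have := le_trans (dist2_ge0 a a) (dist2_le_diam aS aS).
have := dist2_ge0 a b; nra.
Qed.

Lemma coord_abs_le_radius S m c i : c \in S ->
  `|c ord0 i - m ord0 i| <= Defs.radius S m.
Proof.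
move=> cS; rewrite -ler_sqr ?nnegrE ?radius_ge0 // real_normK ?num_real //.
apply: le_trans (coord_sqr_le_dist2 _ _ i) _.
by rewrite ler_sqr ?nnegrE ?dist2_ge0 ?radius_ge0 ?dist2_le_radius.
Qed.

Lemma radius_gt0 S m a b : a \in S -> b \in S -> a != b -> 0 < Defs.radius S m.
Proof.
move=> aS bS; rewrite lt_neqAle radius_ge0 andbT; apply: contra => /eqP R0.
have at_m c : c \in S -> c = m.
  move=> cS; apply: dist2_eq0; apply/eqP; rewrite eq_le dist2_ge0 andbT R0.
  exact: dist2_le_radius.
by rewrite (at_m a aS) (at_m b bS).
Qed.

End Geometry.

Section SqrtWindow.
Variable R : realType.

Definition sqrt_window (a b : R) : R :=
  Num.max 0 (Num.max 0 b ^+ 2 - Num.max 0 a ^+ 2).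

(* Separation events are not shown to be measurable: monotonicity comes from
   lebesgue_measure being an outer measure. *)
Lemma lebesgue_measure_le (A B : set R) :
  (A `<=` B)%classic -> (lebesgue_measure A <= lebesgue_measure B)%E.
Proof.
move=> AB; rewrite /lebesgue_measure /lebesgue_stieltjes_measure.
exact: le_outer_measure.
Qed.

Lemma sqrt_window_le_lebesgue (A : set R) (a b : R) : b <= 1 ->
  (forall t, 0 < t < 1 -> a < Num.sqrt t < b -> A t) ->
  ((sqrt_window a b)%:E <= lebesgue_measure A)%E.
Proof.
move=> b1 sub; rewrite /sqrt_window.
set a' := Num.max 0 a; set b' := Num.max 0 b.
have a'0 : 0 <= a' by rewrite le_max lexx.
have b'0 : 0 <= b' by rewrite le_max lexx.
have b'1 : b' <= 1 by rewrite ge_max ler01.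
case: (leP (b' ^+ 2 - a' ^+ 2) 0) => [le0|gt0].
  exact: measure_ge0.
have ab2 : a' ^+ 2 < b' ^+ 2 by rewrite -subr_gt0.
have -> : (b' ^+ 2 - a' ^+ 2)%:E = lebesgue_measure `]a' ^+ 2, b' ^+ 2[%classic.
  by rewrite lebesgue_measure_itv /= lte_fin ab2 EFinB.
apply: lebesgue_measure_le => t /=; rewrite in_itv /= => /andP [at_ tb].
have t0 : 0 < t by apply: le_lt_trans at_; exact: sqr_ge0.
apply: sub; first by rewrite t0 /=; apply: lt_le_trans tb _; nra.
have st0 : 0 <= Num.sqrt t := sqrtr_ge0 t.
have /andP [a's b's] : a' < Num.sqrt t < b'.
  rewrite -(ger0_norm a'0) -(ger0_norm b'0) -!sqrtr_sqr.
  by rewrite !ltr_sqrt ?at_ ?tb //; exact: lt_trans tb.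
apply/andP; split; first by apply: le_lt_trans a's; rewrite le_max lexx orbT.
by move: b's; rewrite lt_max ltNge st0.
Qed.

(* Up to factors 1 +- O(e), the two windows add up to v|v| - u|u| >= (v - u)^2 / 2. *)
Lemma sqrt_window_pair_ge (e u v : R) : 0 <= e -> e <= 1 / 320 -> u <= v ->
  2 / 5 * (v - u) ^+ 2 - 5 * e * (u ^+ 2 + v ^+ 2) <=
  sqrt_window (u / (1 - e)) (v / (1 + e)) +
  sqrt_window ((- v) / (1 - e)) ((- u) / (1 + e)).
Proof.
move=> e0 e1 uv; rewrite /sqrt_window.
set k1 := (1 + e)^-1; set k2 := (1 - e)^-1.
have k1e : k1 * (1 + e) = 1 by rewrite mulVf //; apply/eqP; lra.
have k2e : k2 * (1 - e) = 1 by rewrite mulVf //; apply/eqP; lra.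
have k1_gt0 : 0 < k1 by nra.
have k2_gt0 : 0 < k2 by nra.
have k1_sqr : 4 / 5 <= k1 ^+ 2 /\ 1 - 2 * e <= k1 ^+ 2 by split; nra.
have k2_le : k2 <= 1 + 2 * e by nra.
have k2_sqr : k2 ^+ 2 <= 1 + 3 * e by nra.
have max0r (y : R) : 0 <= y -> Num.max 0 y = y by move/max_idPr.
have max0l (y : R) : y <= 0 -> Num.max 0 y = 0 by move/max_idPl.
have uv_sqr : (v - u) ^+ 2 <= 2 * (u ^+ 2 + v ^+ 2) by have := sqr_ge0 (u + v); nra.
case: (lerP 0 u) => [u_ge0|u_lt0].
  rewrite (max0r (u * k2)) ?(max0r (v * k1))
          ?(max0l (- u * k1)) ?(max0l (- v * k2)); [|nra..].
  rewrite expr0n subrr maxxx addr0 le_max; apply/orP; right; nra.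
case: (lerP v 0) => [v_le0|v_gt0].
  rewrite (max0l (u * k2)) ?(max0l (v * k1))
          ?(max0r (- u * k1)) ?(max0r (- v * k2)); [|nra..].
  rewrite expr0n subrr maxxx add0r le_max; apply/orP; right; nra.
rewrite (max0l (u * k2)) ?(max0r (v * k1))
        ?(max0r (- u * k1)) ?(max0l (- v * k2)); [|nra..].
rewrite expr0n /= !subr0 !max0r ?sqr_ge0 //; nra.
Qed.

End SqrtWindow.

Section Separation.
Variables (R : realType) (d : nat).
Notation pt := 'rV[R]_d.
Implicit Types (m x p q : pt) (S : seq pt).

Lemma next_centers_separate eps S m x i t sigma p q :
  0 <= eps -> p \in S -> q \in S ->
  p ord0 i < m ord0 i + (sigma - eps) * Num.sqrt t * Defs.radius S m ->
  m ord0 i + (sigma + eps) * Num.sqrt t * Defs.radius S m < q ord0 i ->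
  p \notin next_centers eps S m x i t sigma \/
  q \notin next_centers eps S m x i t sigma.
Proof.
move=> eps0 pS qS p_lo q_hi; rewrite /next_centers.
have h0 : 0 <= eps * Num.sqrt t * Defs.radius S m.
  by rewrite !mulr_ge0 ?sqrtr_ge0 ?radius_ge0.
have shift (s : R) : (sigma + s) * Num.sqrt t * Defs.radius S m =
    sigma * Num.sqrt t * Defs.radius S m + s * Num.sqrt t * Defs.radius S m.
  by rewrite !mulrDl.
set L := [seq c <- S | _]; set G := [seq c <- S | _].
have pL : p \in L by rewrite mem_filter pS andbT; move: p_lo; rewrite !shift; lra.
have qG : q \in G by rewrite mem_filter qS andbT; move: q_hi; rewrite !shift; lra.
have -> : (L != [::]) && (G != [::]).
  by apply/andP; split; apply/eqP => E; [rewrite E in pL | rewrite E in qG].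
case: ifP => _.
  by right; rewrite mem_filter negb_and -ltNge q_hi.
by left; rewrite mem_filter negb_and -ltNge p_lo.
Qed.

Lemma sep_eventC eps S m x c1 c2 i sigma :
  sep_event eps S m x c1 c2 i sigma = sep_event eps S m x c2 c1 i sigma.
Proof.
rewrite /sep_event; apply/seteqP; split=> t /= [t01 sep]; split=> //.
  by case: sep; [right | left].
by case: sep; [right | left].
Qed.

Definition coord_gain (eps : R) m (c1 c2 : pt) (i : 'I_d) : R :=
  2 / 5 * (c1 ord0 i - c2 ord0 i) ^+ 2 -
  5 * eps * ((c1 ord0 i - m ord0 i) ^+ 2 + (c2 ord0 i - m ord0 i) ^+ 2).

Lemma coord_gainC eps m c1 c2 i : coord_gain eps m c1 c2 i = coord_gain eps m c2 c1 i.
Proof. by rewrite /coord_gain; ring. Qed.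

Lemma sum_coord_gain eps m c1 c2 :
  \sum_(i < d) coord_gain eps m c1 c2 i =
  2 / 5 * dist2 c1 c2 ^+ 2 - 5 * eps * (dist2 c1 m ^+ 2 + dist2 c2 m ^+ 2).
Proof. by rewrite sumrB -!mulr_sumr big_split /= !dist2_sqr. Qed.

Lemma sum_coord_gain_ge (eps r : R) m c1 c2 :
  0 <= eps -> eps <= 1 / 320 -> 0 < r ->
  dist2 c1 m <= r -> dist2 c2 m <= r -> r ^+ 2 <= 8 * dist2 c1 c2 ^+ 2 ->
  3 / 160 <= (\sum_(i < d) coord_gain eps m c1 c2 i) / r ^+ 2.
Proof.
move=> eps_ge0 eps_le r_gt0 c1m c2m r_le.
rewrite sum_coord_gain ler_pdivlMr ?exprn_gt0 //.
have c1m2 : dist2 c1 m ^+ 2 <= r ^+ 2 by rewrite ler_sqr ?nnegrE ?dist2_ge0 ?(ltW r_gt0).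
have c2m2 : dist2 c2 m ^+ 2 <= r ^+ 2 by rewrite ler_sqr ?nnegrE ?dist2_ge0 ?(ltW r_gt0).
nra.
Qed.

Lemma sep_event_lebesgue_coord eps S m x c1 c2 i :
  0 <= eps -> eps <= 1 / 320 -> 0 < Defs.radius S m -> c1 \in S -> c2 \in S ->
  ((coord_gain eps m c1 c2 i / Defs.radius S m ^+ 2)%:E <=
   lebesgue_measure (sep_event eps S m x c1 c2 i 1) +
   lebesgue_measure (sep_event eps S m x c1 c2 i (-1)))%E.
Proof.
move=> eps0 eps1 Ru_gt0.
wlog le12 : c1 c2 / c1 ord0 i - m ord0 i <= c2 ord0 i - m ord0 i.
  move=> wl c1S c2S; case: (leP (c1 ord0 i - m ord0 i) (c2 ord0 i - m ord0 i)).
    by move=> le12; exact: wl.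
  move=> /ltW /wl /(_ c2S c1S).
  by rewrite coord_gainC !(sep_eventC _ _ _ _ c2).
move=> c1S c2S; set Ru := Defs.radius S m.
set u := (c1 ord0 i - m ord0 i) / Ru; set v := (c2 ord0 i - m ord0 i) / Ru.
have c1u : c1 ord0 i = m ord0 i + u * Ru by rewrite divfK ?gt_eqF // addrC subrK.
have c2v : c2 ord0 i = m ord0 i + v * Ru by rewrite divfK ?gt_eqF // addrC subrK.
have abs_le1 c : c \in S -> `|(c ord0 i - m ord0 i) / Ru| <= 1.
  move=> cS; rewrite normrM normfV (gtr0_norm Ru_gt0) ler_pdivrMr // mul1r.
  exact: coord_abs_le_radius.
have /ler_normlP [u_ge u_le] : `|u| <= 1 := abs_le1 _ c1S.
have /ler_normlP [v_ge v_le] : `|v| <= 1 := abs_le1 _ c2S.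
have uv : u <= v by rewrite ler_pM2r ?invr_gt0.
have -> : coord_gain eps m c1 c2 i / Ru ^+ 2 =
    2 / 5 * (v - u) ^+ 2 - 5 * eps * (u ^+ 2 + v ^+ 2).
  by rewrite /coord_gain c1u c2v; field; rewrite gt_eqF.
have := sqrt_window_pair_ge eps0 eps1 uv; rewrite -lee_fin => /le_trans; apply.
rewrite EFinD; apply: leeD; apply: sqrt_window_le_lebesgue.
- by rewrite ler_pdivrMr; lra.
- move=> t t01 /andP [ut tv]; split => //; apply: next_centers_separate => //.
    rewrite c1u ltrD2l ltr_pM2r //.
    by move: ut; rewrite ltr_pdivrMr; lra.
  rewrite c2v ltrD2l ltr_pM2r //.
  by move: tv; rewrite ltr_pdivlMr; lra.
- by rewrite ler_pdivrMr; lra.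
- move=> t t01 /andP [vt tu]; split => //; apply: next_centers_separate => //.
    rewrite c1u ltrD2l ltr_pM2r //.
    by move: tu; rewrite ltr_pdivlMr; lra.
  rewrite c2v ltrD2l ltr_pM2r //.
  by move: vt; rewrite ltr_pdivrMr; lra.
Qed.

End Separation.

Lemma eps_of_bounds (R : realType) (delta : R) (k : nat) :
  0 <= delta -> (0 < k)%N -> 0 <= eps_of delta k <= 1 / 320.
Proof.
move=> delta_ge0 k_gt0; rewrite /eps_of ge_min lexx orbT andbT le_min.
by rewrite divr_ge0 ?mulr_ge0 ?ln_ge0 ?ler1n.
Qed.

Theorem lemma3 (R : realType) (d k : nat) (delta : R)
    (S : seq 'rV[R]_d) (m x c1 c2 : 'rV[R]_d) :
  (0 < d)%N -> 0 < delta < 1 ->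
  uniq S -> (size S <= k)%N ->
  is_median S m ->
  c1 \in S -> c2 \in S -> c1 != c2 ->
  diam S / 2 <= dist2 c1 c2 ->
  ((1 / (128 * d%:R))%:E <= sep_prob (eps_of delta k) S m x c1 c2)%E.
Proof.
move=> d_gt0 /andP [delta_gt0 _] _ Sk Hm c1S c2S c12 diam_le.
set eps := eps_of delta k; set Ru := Defs.radius S m.
have /andP [eps_ge0 eps_le] : 0 <= eps <= 1 / 320.
  by apply: eps_of_bounds (ltW delta_gt0) _; apply: leq_trans Sk; case: (S) c1S.
have Ru_gt0 : 0 < Ru := radius_gt0 m c1S c2S c12.
have Ru_le : Ru ^+ 2 <= 8 * dist2 c1 c2 ^+ 2 := radius_sqr_le_dist2 Hm c1S c2S diam_le.
have gain := sum_coord_gain_ge eps_ge0 eps_le Ru_gt0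
  (dist2_le_radius m c1S) (dist2_le_radius m c2S) Ru_le.
rewrite /sep_prob -/eps.
apply: (@le_trans _ _
  (\sum_(i < d) (1 / (2 * d%:R) * (coord_gain eps m c1 c2 i / Ru ^+ 2))%:E)).
  rewrite sumEFin lee_fin -mulr_sumr -mulr_suml.
  have d_pos : 0 < d%:R :> R by rewrite ltr0n.
  rewrite (_ : 1 / (128 * d%:R) = 1 / (2 * d%:R) * (1 / 64)); last by field; lra.
  by apply: ler_wpM2l; [rewrite divr_ge0 ?mulr_ge0 | lra].
apply: lee_sum => i _; rewrite big_bool /= -ge0_muleDr ?measure_ge0 // EFinM.
apply: lee_wpmul2l; first by rewrite lee_fin divr_ge0 ?mulr_ge0.
exact: sep_event_lebesgue_coord.
Qed.
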